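(* Let $p\in(0,1)$ and let $(\lambda_n)_{n\ge1}$ be a sequence with $\lambda_1=1$ and $0\le\lambda_n\le\lambda_{n-1}$ for all $n>1$. Let $r_1,r_2,\dots$ be $\{0,1\}$-valued random variables with $\Pr(r_1=1)=p$ and, for every $n\ge2$, $\Pr(r_n=1\mid r_1,\dots,r_{n-1})=\lambda_n p+(1-\lambda_n)\bar p_{n-1}$, where $\bar p_m=\frac1m\sum_{i=1}^m r_i$. If $\bar p_n$ is consistent, i.e. $\lim_{n\to\infty}\Pr(|\bar p_n-p|>\epsilon)=0$ for every $\epsilon>0$, then $\lim_{n\to\infty}\sum_{i=1}^n\lambda_i^2=\infty$. *)

From HB Require Import structures.
From mathcomp Require Import all_boot all_order all_algebra.
From mathcomp Require Import all_classical all_reals all_analysis.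
Set Implicit Arguments. Unset Strict Implicit. Unset Printing Implicit Defensive.
Import Order.TTheory GRing.Theory Num.Theory.
Local Open Scope ring_scope.
Local Open Scope classical_set_scope.

Definition pbar {T : Type} {R : realType} (r : nat -> T -> R) (m : nat) (t : T) : R :=
  (m%:R)^-1 * \sum_(1 <= i < m.+1) r i t.

Definition cyl {T : Type} {R : realType} (r : nat -> T -> R) (n : nat) (x : nat -> R)
  : set T := [set t | forall i, (1 <= i < n)%N -> r i t = x i].

From HB Require Import structures.
From mathcomp Require Import all_boot all_order all_algebra.
From mathcomp Require Import all_classical all_reals all_analysis.
From mathcomp Require Import ring lra measurable_realfun.
Set Implicit Arguments. Unset Strict Implicit. Unset Printing Implicit Defensive.
Import Order.TTheory GRing.Theory Num.Theory.
Local Open Scope ring_scope.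
Local Open Scope classical_set_scope.

(* Let V_n = E (pbar_n - p)^2; it is a finite sum over the 2^n cylinders
   {r_1 ... r_n = s}. Conditioning on the first n draws and applying Jensen
   gives V_(n+1) >= (1 - lam_(n+1) / (n+1))^2 V_n. Since (1 - a)^2 >= exp (-4a)
   for a <= 1/2 and lam_k / k <= lam_k^2 + 1/(k-1) - 1/k, iterating yields
   V_n >= p (1 - p) exp (-4 (sum_(k <= n) lam_k^2 + 1)). Consistency together
   with |pbar_n - p| <= 1 forces V_n -> 0, so sum_k lam_k^2 cannot be bounded. *)

Lemma sqr_wavg_le (R : realDomainType) (w0 w1 a b c : R) :
  0 <= w0 -> 0 <= w1 -> w0 * a + w1 * b = (w0 + w1) * c ->
  (w0 + w1) * c ^+ 2 <= w0 * a ^+ 2 + w1 * b ^+ 2.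
Proof.
move=> w0_ge0 w1_ge0 avg; rewrite -subr_ge0.
have -> : w0 * a ^+ 2 + w1 * b ^+ 2 - (w0 + w1) * c ^+ 2 =
    w0 * (a - c) ^+ 2 + w1 * (b - c) ^+ 2
    + 2 * c * ((w0 * a + w1 * b) - (w0 + w1) * c) by ring.
by rewrite avg subrr mulr0 addr0 addr_ge0 // mulr_ge0 // sqr_ge0.
Qed.

Lemma expR_mulN4_le (R : realType) (a : R) :
  0 <= a -> a <= 1 / 2 -> expR (-4 * a) <= (1 - a) ^+ 2.
Proof.
move=> a_ge0 a_le.
have -> : -4 * a = 2%:R * - (2 * a) by lra.
rewrite expRM_natl lerXn2r ?nnegrE ?expR_ge0 //; first lra.
rewrite expRN (@le_trans _ _ (1 + 2 * a)^-1) //.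
  by rewrite lef_pV2 ?posrE ?expR_gt0 ?expR_ge1Dx //; lra.
rewrite -div1r ler_pdivrMr; nra.
Qed.

Lemma sum_div_le_sum_sqr (R : realType) (x : nat -> R) n :
  \sum_(2 <= k < n.+1) x k / k%:R <= \sum_(2 <= k < n.+1) x k ^+ 2 + 1.
Proof.
pose f k : R := - k.+1%:R^-1.
(* x / (k + 2) <= x ^ 2 + 1 / (4 (k + 2) ^ 2) <= x ^ 2 + (f (k + 1) - f k) *)
have term k : x k.+2 / k.+2%:R <= x k.+2 ^+ 2 + (f k.+1 - f k).
  rewrite /f opprK addrC -natr1 -[k.+1%:R]natr1.
  have k1_ge1 : 1 <= k%:R + 1 :> R by rewrite lerDr.
  set y := (k%:R + 1 + 1)^-1; set z := (k%:R + 1)^-1.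
  have y_gt0 : 0 < y by rewrite invr_gt0; lra.
  have zBy : z - y = z * y by rewrite /y /z; field; lra.
  have y_le_z : y <= z by rewrite lef_pV2 ?posrE; lra.
  have : 0 <= y * (z - y) by rewrite mulr_ge0 ?subr_ge0 // ltW.
  have := sqr_ge0 (x k.+2 - y / 2); rewrite zBy; nra.
rewrite !big_add1 /= (le_trans (ler_sum _ (fun k _ => term k))) //.
rewrite big_split lerD2l telescope_sumr // /f invr1 opprK addrC lerBlDr lerDl.
by rewrite invr_ge0.
Qed.

Section BinaryWords.
Variable R : numFieldType.

Fixpoint words01 (n : nat) : seq (seq R) :=
  if n is m.+1 then [seq rcons s b | s <- words01 m, b <- [:: 0; 1]]
  else [:: [::]].

Lemma big_words01S (F : seq R -> R) n :
  \sum_(s <- words01 n.+1) F s =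
  \sum_(s <- words01 n) (F (rcons s 0) + F (rcons s 1)).
Proof. by rewrite big_allpairs_dep; apply: eq_bigr => s _; rewrite big_cons big_seq1. Qed.

Lemma mem_words01 n s : s \in words01 n -> size s = n /\ {subset s <= [:: 0; 1]}.
Proof.
elim: n s => [|n IH] s; first by rewrite inE => /eqP ->.
move=> /allpairsP [[u b] [/IH [size_u u01] b01 ->]] /=.
split; first by rewrite size_rcons size_u.
by move=> x; rewrite mem_rcons inE => /predU1P [->|/u01].
Qed.

Definition mean (s : seq R) : R := (size s)%:R^-1 * \sum_(x <- s) x.

Lemma mulr_size_mean s : (size s)%:R * mean s = \sum_(x <- s) x.
Proof.
case: s => [|x s]; first by rewrite /mean big_nil !mulr0.
by rewrite /mean mulrA mulfV ?mul1r // pnatr_eq0.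
Qed.

Lemma mean_rcons s b :
  mean (rcons s b) = ((size s)%:R * mean s + b) / ((size s)%:R + 1).
Proof.
by rewrite {1}/mean size_rcons -cats1 big_cat big_seq1 /= -mulr_size_mean -natr1 mulrC.
Qed.

Lemma mean_01 s : {subset s <= [:: 0; 1]} -> 0 <= mean s <= 1.
Proof.
move=> s01; have x01 x : x \in s -> 0 <= x <= 1.
  by move/s01; rewrite !inE => /orP[] /eqP ->; rewrite ?lexx ?ler01.
have [sum_ge0 sum_le] : 0 <= \sum_(x <- s) x /\ \sum_(x <- s) x <= (size s)%:R.
  split; first by rewrite big_seq sumr_ge0 // => x /x01 /andP[].
  by rewrite -sum1_size natr_sum !big_seq ler_sum // => x /x01 /andP[].
case: s {s01 x01} sum_ge0 sum_le => [|y s].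
  by rewrite /mean big_nil mulr0 lexx ler01.
move=> sum_ge0 sum_le; rewrite /mean mulr_ge0 //=.
by rewrite ler_pdivrMl ?ltr0n // mulr1.
Qed.
End BinaryWords.

Section Cylinders.
Variables (R : realType) (d : measure_display) (T : measurableType d).
Variables (P : probability T R) (r : nat -> T -> R).
Hypothesis r_meas : forall i, measurable_fun setT (r i).
Hypothesis r01 : forall i t, r i t = 0 \/ r i t = 1.

Definition cylinder (s : seq R) : set T := cyl r (size s).+1 (fun i => nth 0 s i.-1).

Definition cyl_mass (B : set T) (s : seq R) : R := fine (P (cylinder s `&` B)).

Lemma sum_nth_pred (s : seq R) :
  \sum_(1 <= i < (size s).+1) nth 0 s i.-1 = \sum_(x <- s) x.
Proof. by rewrite big_add1 /= [RHS](big_nth 0). Qed.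

Lemma measurable_r_eq i b : measurable [set t | r i t = b].
Proof. by rewrite -[X in measurable X]setTI; exact: r_meas (measurable_set1 b). Qed.

Lemma measurable_cyl n x : measurable (cyl r n x).
Proof.
have -> : cyl r n x = \bigcap_i [set t | (1 <= i < n)%N -> r i t = x i].
  by apply/seteqP; split=> t /= cyl_t => [i _|i]; [exact: cyl_t | exact: cyl_t i I].
apply: bigcapT_measurable => i; have [i_in|i_out] := boolP (1 <= i < n)%N.
  rewrite (_ : [set t | _] = [set t | r i t = x i]); first exact: measurable_r_eq.
  by apply/seteqP; split=> t /=; [apply | move=> ? _].
by rewrite (_ : [set t | _] = setT) //; apply/seteqP; split=> t //= _ /(negP i_out).
Qed.

Lemma cylinder_nil : cylinder [::] = setT.
Proof. by apply/seteqP; split=> t //= _ [|i]. Qed.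

Lemma cylinder_rcons s b :
  cylinder (rcons s b) = cylinder s `&` [set t | r (size s).+1 t = b].
Proof.
rewrite /cylinder /cyl size_rcons; apply/seteqP; split=> t /=.
  move=> cyl_t; split=> [[|i] // /andP[_ i_lt]|]; last first.
    by rewrite cyl_t //= nth_rcons ltnn eqxx.
  rewrite cyl_t /=; last by rewrite ltnS ltnW.
  by rewrite nth_rcons -ltnS i_lt.
move=> [cyl_t tb] [|i] // /andP[_]; rewrite /= ltnS nth_rcons.
case: (ltngtP i (size s)) => [i_lt _ | i_gt | -> _ //]; first exact: cyl_t.
by rewrite ltnNge i_gt.
Qed.

Lemma cyl_mass_ge0 B s : 0 <= cyl_mass B s.
Proof. exact: fine_ge0. Qed.

Lemma cyl_mass_rcons B s : measurable B ->
  cyl_mass B s = cyl_mass B (rcons s 0) + cyl_mass B (rcons s 1).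
Proof.
move=> mB; rewrite /cyl_mass !cylinder_rcons.
have mCb b : measurable (cylinder s `&` [set t | r (size s).+1 t = b] `&` B).
  by apply: measurableI => //; apply: measurableI;
    [exact: measurable_cyl | exact: measurable_r_eq].
rewrite -fineD ?fin_num_measure // -measureU //; last first.
  apply/seteqP; split=> t //= [[[_ ->] _] [[_ /eqP]]].
  by rewrite eq_sym oner_eq0.
congr (fine (P _)); apply/seteqP; split=> t /=; last by case=> -[[]].
by move=> [cyl_t Bt]; case: (r01 (size s).+1 t) => rt; [left | right].
Qed.

Lemma sum_cyl_mass B n : measurable B ->
  \sum_(s <- words01 R n) cyl_mass B s = fine (P B).
Proof.
move=> mB; elim: n => [|n IH].
  by rewrite big_seq1 /cyl_mass cylinder_nil setTI.
by rewrite big_words01S -IH; apply: eq_bigr => s _; rewrite -cyl_mass_rcons.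
Qed.

Lemma pbar_cylinder s t : cylinder s t -> pbar r (size s) t = mean s.
Proof.
move=> cyl_t; rewrite /pbar /mean -sum_nth_pred; congr (_ * _).
by apply: eq_big_nat => i i_in; apply: cyl_t.
Qed.

Lemma measurable_pbar_dev_gt n (c eps : R) :
  measurable [set t | eps < `|pbar r n t - c|].
Proof.
have pbar_meas : measurable_fun setT (pbar r n).
  by apply: measurable_funM => //; exact: measurable_sum.
have dev_meas : measurable_fun setT (fun t => `|pbar r n t - c|).
  apply: measurableT_comp; first exact: normr_measurable.
  exact: measurable_funB.
have := dev_meas measurableT _ (measurable_itv `]eps, +oo[%R); rewrite setTI.
by congr measurable; apply/seteqP; split=> t /=; rewrite in_itv /= andbT.
Qed.

End Cylinders.

Section Urn.
Variables (R : realType) (d : measure_display) (T : measurableType d).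
Variables (P : probability T R) (p : R) (lam : nat -> R) (r : nat -> T -> R).
Hypothesis p01 : 0 < p < 1.
Hypothesis lam1 : lam 1%N = 1.
Hypothesis lam_noninc : forall n, (1 < n)%N -> 0 <= lam n <= lam n.-1.
Hypothesis r_meas : forall i, measurable_fun setT (r i).
Hypothesis r01 : forall i t, r i t = 0 \/ r i t = 1.
Hypothesis P_r1 : P [set t | r 1%N t = 1] = p%:E.
Hypothesis P_cond : forall (n : nat) (x : nat -> R), (2 <= n)%N ->
  P (cyl r n x `&` [set t | r n t = 1]) =
  ((lam n * p + (1 - lam n) * ((n.-1)%:R^-1 * \sum_(1 <= i < n) x i))%:E
     * P (cyl r n x))%E.

Local Notation mass := (cyl_mass P r setT).

(* [msd n] is E (pbar_n - p)^2, split over the cylinders of the first n draws. *)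
Definition msd n := \sum_(s <- words01 R n) mass s * (mean s - p) ^+ 2.

Lemma lam_ge0_le1 n : (1 <= n)%N -> 0 <= lam n <= 1.
Proof.
elim: n => // -[_ _|n IH _]; first by rewrite lam1 ler01 lexx.
have /andP[lam_ge0 lam_le] := lam_noninc (isT : (1 < n.+2)%N).
by have /andP[_ /(le_trans lam_le) ->] := IH isT; rewrite lam_ge0.
Qed.

Lemma mass_rcons1 s : (1 <= size s)%N ->
  mass (rcons s 1) = (lam (size s).+1 * p + (1 - lam (size s).+1) * mean s) * mass s.
Proof.
move=> s_ge1; rewrite /cyl_mass !setIT cylinder_rcons P_cond ?ltnS //= sum_nth_pred.
by rewrite fineM // fin_num_measure //; apply: measurable_cyl.
Qed.

Lemma mass_word1 : mass [:: 1] = p.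
Proof.
rewrite /cyl_mass setIT -[[:: 1]]/(rcons [::] 1) cylinder_rcons cylinder_nil setTI.
by rewrite P_r1.
Qed.

Lemma mass_word0 : mass [:: 0] = 1 - p.
Proof.
have := cyl_mass_rcons P r_meas r01 [::] (@measurableT _ T).
rewrite /= mass_word1 {1}/cyl_mass cylinder_nil setIT probability_setT /= => ->.
by rewrite addrK.
Qed.

Lemma msd1 : msd 1 = p * (1 - p).
Proof.
rewrite /msd big_words01S big_seq1 /= mass_word0 mass_word1.
rewrite /mean /= !big_seq1 invr1 !mul1r; ring.
Qed.

(* Given the first n draws, pbar_(n+1) - p has conditional mean
   (1 - lam_(n+1) / (n+1)) (pbar_n - p); apply Jensen on each cylinder. *)
Lemma msd_step n : (1 <= n)%N ->
  (1 - lam n.+1 / n.+1%:R) ^+ 2 * msd n <= msd n.+1.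
Proof.
move=> n_ge1; rewrite /msd big_words01S mulr_sumr !big_seq.
apply: ler_sum => s /mem_words01 [size_s _].
have mass_s := cyl_mass_rcons P r_meas r01 s measurableT.
have mass_s0 : mass (rcons s 0) = mass s - mass (rcons s 1) by rewrite mass_s addrK.
rewrite !mean_rcons size_s mulrCA -exprMn mass_s.
apply: sqr_wavg_le; rewrite ?cyl_mass_ge0 // -mass_s mass_s0 mass_rcons1 size_s //.
by rewrite -natr1; field; rewrite natr1 pnatr_eq0.
Qed.

Lemma msd_ge_expR n : (1 <= n)%N ->
  p * (1 - p) * expR (-4 * \sum_(2 <= k < n.+1) lam k / k%:R) <= msd n.
Proof.
have /andP[p_gt0 p_lt1] := p01.
elim: n => // -[_ _|n IH _]; first by rewrite big_geq // mulr0 expR0 mulr1 msd1.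
apply: le_trans (msd_step (ltn0Sn n)).
rewrite big_nat_recr //= (mulrDr (-4)) expRD mulrA [X in _ <= X]mulrC.
have /andP[lam_ge0 lam_le1] := lam_ge0_le1 (isT : (1 <= n.+2)%N).
apply: ler_pM; rewrite ?expR_ge0 ?IH //.
  by rewrite mulr_ge0 ?expR_ge0 // mulr_ge0 //; lra.
apply: expR_mulN4_le; first by rewrite divr_ge0.
rewrite ler_pdivrMr // (le_trans lam_le1) // -subr_ge0.
have : 2 <= n.+2%:R :> R by rewrite ler_nat.
lra.
Qed.

Lemma msd_ge_pos_of_bounded B :
  (forall n, \sum_(1 <= i < n.+1) lam i ^+ 2 <= B) ->
  exists2 c, 0 < c & forall n, (1 <= n)%N -> c <= msd n.
Proof.
have /andP[p_gt0 p_lt1] := p01.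
move=> sum_le; exists (p * (1 - p) * expR (-4 * (B + 1))).
  by rewrite !mulr_gt0 ?expR_gt0 ?subr_gt0.
move=> n n_ge1; apply: le_trans (msd_ge_expR n_ge1).
rewrite ler_pM2l; last by rewrite mulr_gt0 ?subr_gt0.
rewrite ler_expR ler_nM2l; last by lra.
apply: le_trans (sum_div_le_sum_sqr lam n) _; rewrite lerD2r.
by apply: le_trans (sum_le n); rewrite [leRHS]big_ltn ?ltnS // lerDr sqr_ge0.
Qed.

Lemma msd_ge0 n : 0 <= msd n.
Proof. by rewrite sumr_ge0 // => s _; rewrite mulr_ge0 ?cyl_mass_ge0 ?sqr_ge0. Qed.

Lemma msd_le n (eps : R) : 0 < eps ->
  msd n <= eps ^+ 2 + fine (P [set t | eps < `|pbar r n t - p|]).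
Proof.
have /andP[p_gt0 p_lt1] := p01.
move=> eps_gt0; set A := [set t | _].
have mA : measurable A by exact: measurable_pbar_dev_gt.
have mass1 : \sum_(s <- words01 R n) mass s = 1.
  by rewrite sum_cyl_mass // probability_setT.
rewrite -(sum_cyl_mass P r_meas r01 n mA) -[eps ^+ 2]mulr1 -mass1 mulr_sumr.
rewrite -big_split /msd !big_seq; apply: ler_sum => s /mem_words01 [size_s s01].
have mass_ge0 := cyl_mass_ge0 P r setT s.
have massA_ge0 := cyl_mass_ge0 P r A s.
have [near|far] := lerP `|mean s - p| eps.
  have : (mean s - p) ^+ 2 <= eps ^+ 2.
    by rewrite -real_normK ?num_real // lerXn2r ?nnegrE // ltW.
  move=> dev_le; rewrite [eps ^+ 2 * _]mulrC -[leLHS]addr0 lerD //.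
  exact: ler_wpM2l.
have -> : cyl_mass P r A s = mass s.
  rewrite /cyl_mass setIT; congr (fine (P _)); apply/seteqP.
  split=> [t [] //|t cyl_t]; split=> //.
  by rewrite /A /= -size_s pbar_cylinder.
have /andP[mean_ge0 mean_le1] := mean_01 s01.
have dev_le1 : (mean s - p) ^+ 2 <= 1 by nra.
have eps2_mass_ge0 : 0 <= eps ^+ 2 * mass s by rewrite mulr_ge0 ?sqr_ge0.
rewrite -[leLHS]add0r lerD // -[leRHS]mulr1.
exact: ler_wpM2l.
Qed.

Lemma msd_cvg0 :
  (forall eps : R, 0 < eps ->
     (fun n => P [set t | eps < `|pbar r n t - p|]) @ \oo --> 0%E) ->
  msd @ \oo --> 0.
Proof.
move=> consistent; apply/cvgr0Pnorm_lt => e e_gt0.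
pose eps := Num.min (e / 2) 1.
have eps_gt0 : 0 < eps by rewrite lt_min ltr01 andbT divr_gt0.
have eps2_le : eps ^+ 2 <= e / 2.
  have : eps <= e / 2 by rewrite ge_min lexx.
  have : eps <= 1 by rewrite ge_min lexx orbT.
  nra.
have far_small : \forall n \near \oo,
    fine (P [set t | eps < `|pbar r n t - p|]) < e / 2.
  have /fine_cvgP [_ /cvgr0Pnorm_lt far0] := consistent eps eps_gt0.
  move: (far0 _ (divr_gt0 e_gt0 (ltr0Sn _ 1))); apply: filterS => n /=.
  by rewrite ger0_norm // fine_ge0.
move: far_small; apply: filterS => n far_n; rewrite ger0_norm ?msd_ge0 //.
by apply: le_lt_trans (msd_le n eps_gt0) _; lra.
Qed.

End Urn.

Theorem theoremA6 (R : realType) (d : measure_display) (T : measurableType d)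
  (P : probability T R) (p : R) (lam : nat -> R) (r : nat -> T -> R) :
  0 < p < 1 ->
  lam 1%N = 1 ->
  (forall n, (1 < n)%N -> 0 <= lam n <= lam n.-1) ->
  (forall i, measurable_fun setT (r i)) ->
  (forall i t, r i t = 0 \/ r i t = 1) ->
  P [set t | r 1%N t = 1] = p%:E ->
  (forall (n : nat) (x : nat -> R), (2 <= n)%N ->
     P (cyl r n x `&` [set t | r n t = 1]) =
     ((lam n * p + (1 - lam n) * ((n.-1)%:R^-1 * \sum_(1 <= i < n) x i))%:E
        * P (cyl r n x))%E) ->
  (forall eps : R, 0 < eps ->
     (fun n => P [set t | eps < `|pbar r n t - p|]) @ \oo --> 0%E) ->
  (fun n => \sum_(1 <= i < n.+1) lam i ^+ 2) @ \oo --> +oo.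
Proof.
move=> p01 lam1 lam_noninc r_meas r01 P_r1 P_cond consistent.
have sum_sqr_nd : {homo (fun n => \sum_(1 <= i < n.+1) lam i ^+ 2) :
    m n / (m <= n)%N >-> m <= n}.
  move=> m n m_le_n; rewrite [leRHS](@big_cat_nat _ _ _ m.+1) ?ltnS //=.
  by rewrite lerDl sumr_ge0 // => i _; rewrite sqr_ge0.
apply: nondecreasing_dvgn_lt => // /(nondecreasing_cvgn_le sum_sqr_nd) sum_le.
have [c c_gt0 msd_ge] :=
  msd_ge_pos_of_bounded p01 lam1 lam_noninc r_meas r01 P_r1 P_cond sum_le.
near \oo => n.
have /negP[] : ~~ (c <= msd P p r n).
  rewrite -ltNge; near: n.
  exact: cvgr_lt (msd_cvg0 p01 r_meas r01 consistent) _ c_gt0.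
by apply: msd_ge; near: n; exists 1%N.
Unshelve. all: by end_near. Qed.
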